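(* Let $n\ge1$, $C>0$, $\sigma:\mathbb{R}\to\mathbb{R}$ a sigmoidal function, and let $\mathbf{A},\mathbf{B}\in\mathbb{R}^{n\times n}$ be non-singular diagonalizable matrices such that (i) $\mathbf{A}^q=a\mathbf{I}$ for some positive integer $q\le n$ and scalar $a\ne0$; (ii) $\mathbf{I}-a\mathbf{B}^q$ is nonsingular; (iii) the eigenvalues of $\mathbf{B}$ have pairwise distinct absolute values. Let $$G_\sigma=\{\mathbf{x}\mapsto\alpha\,\sigma(\mathbf{y}^T\mathbf{x}+\theta):\ |\alpha|\le 2C,\ \mathbf{y}\in\mathbb{R}^n,\ \theta\in\mathbb{R}\},$$ let $G^k_\sigma$ be the set of functions that are sums of at most $k$ elements of $G_\sigma$, and let $S^{kn}_\sigma$ be the set of functions $$\mathbf{x}\mapsto\sum_{j=1}^{kn}\alpha_j\,\sigma(\mathbf{y}_j^T\mathbf{x}+\theta_j)$$ with $|\alpha_j|\le 2C$, $\mathbf{y}_j\in\mathbb{R}^n$, $\theta_j\in\mathbb{R}$, such that for every $i=1,\dots,k$ the matrix $\mathbf{M}_i=[\mathbf{y}_{(i-1)n+1}|\mathbf{y}_{(i-1)n+2}|\cdots|\mathbf{y}_{in}]\in\mathbb{R}^{n\times n}$ satisfies $\mathbf{M}_i-\mathbf{A}\mathbf{M}_i\mathbf{B}=\mathbf{g}_i\mathbf{h}_i^T$ for some $\mathbf{g}_i,\mathbf{h}_i\in\mathbb{R}^n$. Then for every $k\ge1$, $G^k_\sigma\subseteq S^{kn}_\sigma$.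
   Context: A sigmoidal function is a bounded measurable function $\sigma:\mathbb{R}\to\mathbb{R}$ with $\sigma(t)\to1$ as $t\to+\infty$ and $\sigma(t)\to0$ as $t\to-\infty$. Functions are considered on $\mathbb{R}^n$ (or a ball in $\mathbb{R}^n$). *)

From HB Require Import structures.
From mathcomp Require Import all_boot all_order all_algebra.
From mathcomp Require Import all_classical all_reals all_analysis.
From mathcomp.real_closed Require Import complex.
From mathcomp Require Import zify.

Set Implicit Arguments.
Unset Strict Implicit.
Unset Printing Implicit Defensive.

Import Order.TTheory GRing.Theory Num.Theory.
Import numFieldNormedType.Exports.
Local Open Scope classical_set_scope.
Local Open Scope ring_scope.

Definition sigmoidal (R : realType) (s : R -> R) : Prop :=
  [/\ exists M : R, forall t, `|s t| <= M,
      measurable_fun setT s,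
      s t @[t --> +oo] --> (1 : R) &
      s t @[t --> -oo] --> (0 : R)].

Definition dotv (R : realType) (n : nat) (y x : 'cV[R]_n) : R :=
  (y^T *m x) 0 0.

Definition neuron (R : realType) (n : nat) (s : R -> R)
  (alpha : R) (y : 'cV[R]_n) (theta : R) : 'cV[R]_n -> R :=
  fun x => alpha * s (dotv y x + theta).

Definition Gsig (R : realType) (n : nat) (C : R) (s : R -> R)
  : set ('cV[R]_n -> R) :=
  [set f | exists alpha y theta, `|alpha| <= 2 * C /\ f = neuron s alpha y theta].

Definition Gsigk (R : realType) (n : nat) (C : R) (s : R -> R) (k : nat)
  : set ('cV[R]_n -> R) :=
  [set f | exists (m : nat) (g : 'I_m -> 'cV[R]_n -> R),
     [/\ (m <= k)%N, (forall i, Gsig C s (g i)) &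
         f = fun x => \sum_(i < m) g i x]].

Lemma blk_lt (k n : nat) (i : 'I_k) (c : 'I_n) : (i * n + c < k * n)%N.
Proof.
have Hi := ltn_ord i; have Hc := ltn_ord c.
have H : (i.+1 * n <= k * n)%N by rewrite leq_mul2r Hi orbT.
rewrite mulSn in H; lia.
Qed.

(* the (0-based) index i*n + c in 'I_(k*n), i.e. the 1-based index
   (i-1)n + c of the paper *)
Definition blk (k n : nat) (i : 'I_k) (c : 'I_n) : 'I_(k * n) :=
  Ordinal (blk_lt i c).

Definition blockM (R : realType) (k n : nat) (y : 'I_(k * n) -> 'cV[R]_n)
  (i : 'I_k) : 'M[R]_n :=
  \matrix_(r < n, c < n) y (blk i c) r 0.

Definition Ssig (R : realType) (n : nat) (C : R) (s : R -> R)
  (A B : 'M[R]_n) (k : nat) : set ('cV[R]_n -> R) :=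
  [set f | exists (alpha : 'I_(k * n) -> R) (y : 'I_(k * n) -> 'cV[R]_n)
                  (theta : 'I_(k * n) -> R),
     [/\ forall j, `|alpha j| <= 2 * C,
         forall i : 'I_k, exists g h : 'cV[R]_n,
           blockM y i - A *m blockM y i *m B = g *m h^T &
         f = fun x => \sum_(j < k * n) alpha j * s (dotv (y j) x + theta j)]].

Definition cmx (R : realType) (n : nat) (M : 'M[R]_n) : 'M[R[i]]_n :=
  map_mx (fun x : R => (x%:C)%C) M.

From HB Require Import structures.
From mathcomp Require Import all_boot all_order all_algebra.
From mathcomp Require Import all_classical all_reals all_analysis.
From mathcomp.real_closed Require Import complex mxtens.
From mathcomp Require Import lra.

(* Only hypothesis (iii) is needed.  It forces B to have a real eigenvalue mu:
   the characteristic polynomial of B is real, so the conjugate of an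
   eigenvalue is an eigenvalue of the same modulus, hence the same eigenvalue.
   Take a left eigenvector w B = mu w normalised by w_c0 = 1.  A neuron with
   weight y is the sum of the n neurons with weights w_c y whose outer weights
   vanish except at c = c0; their block is M = y w, and
   M - A M B = (y - mu A y) w has rank one.  Sums of fewer than k neurons are
   padded with zero neurons. *)

Set Implicit Arguments.
Unset Strict Implicit.
Unset Printing Implicit Defensive.

Import Order.TTheory GRing.Theory Num.Theory.
Local Open Scope classical_set_scope.
Local Open Scope ring_scope.

Lemma blk_mxtens_index (k n : nat) (i : 'I_k) (c : 'I_n) :
  blk i c = mxtens_index (i, c).
Proof. exact: val_inj. Qed.

Lemma mxtens_unindex_blk (k n : nat) (i : 'I_k) (c : 'I_n) :
  mxtens_unindex (blk i c) = (i, c).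
Proof. by rewrite blk_mxtens_index mxtens_indexK. Qed.

Lemma sum_blk (V : nmodType) (k n : nat) (F : 'I_(k * n) -> V) :
  \sum_(j < k * n) F j = \sum_(i < k) \sum_(c < n) F (blk i c).
Proof.
rewrite pair_big (reindex (@mxtens_index k n)) /=.
  by apply: eq_bigr => -[i c] _; rewrite blk_mxtens_index.
by exists (@mxtens_unindex k n) => [p|j] _; rewrite (mxtens_indexK, mxtens_unindexK).
Qed.

Lemma eigenvalue_cmx_conj (R : realType) (n : nat) (B : 'M[R]_n) (l : R[i]) :
  eigenvalue (cmx B) l -> eigenvalue (cmx B) l^*%C.
Proof.
have charB : char_poly (cmx B) = map_poly (real_complex R) (char_poly B).
  by rewrite /cmx map_char_poly.
rewrite !eigenvalue_root_char -complex_root_conj charB -map_poly_comp.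
by rewrite (eq_map_poly (g := real_complex R)) // => x /=; exact: conjc_real.
Qed.

Lemma eigenvalue_cmx_real (R : realType) (n : nat) (B : 'M[R]_n) (x : R) :
  eigenvalue (cmx B) x%:C%C -> eigenvalue B x.
Proof.
rewrite !eigenvalue_root_char /cmx -map_char_poly.
by rewrite (fmorph_root (real_complex R)).
Qed.

Lemma real_eigenvalue_of_distinct_moduli (R : realType) (n : nat) (B : 'M[R]_n) :
  (0 < n)%N ->
  (forall l m : R[i], eigenvalue (cmx B) l -> eigenvalue (cmx B) m ->
      l != m -> `|l| != `|m|) ->
  exists mu : R, eigenvalue B mu.
Proof.
move=> n0 distinct_moduli; have [l eig_l] := Theorem7' (cmx B) n0.
have conj_l : l^*%C = l.
  apply/eqP; apply: contraT => neq_l.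
  by have := distinct_moduli _ _ (eigenvalue_cmx_conj eig_l) eig_l neq_l; rewrite normcJ eqxx.
move: eig_l conj_l; case: l => x y eig_xy [] y_opp.
have y0 : y = 0 by lra.
rewrite y0 in eig_xy.
by exists x; exact: eigenvalue_cmx_real.
Qed.

Lemma eigenvalue_pinned_left_eigenvector (F : fieldType) (n : nat) (B : 'M[F]_n) (mu : F) :
  eigenvalue B mu -> exists (w : 'rV_n) (c0 : 'I_n), w *m B = mu *: w /\ w 0 c0 = 1.
Proof.
move=> /eigenvalueP [v Bv /rV0Pn [c0 vc0]].
exists ((v 0 c0)^-1 *: v), c0; split; last by rewrite mxE mulVf.
by rewrite -scalemxAl Bv !scalerA mulrC.
Qed.

Lemma displacement_rank_one (F : comPzRingType) (n : nat) (A B : 'M[F]_n)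
    (y : 'cV_n) (w : 'rV_n) (mu : F) :
  w *m B = mu *: w -> y *m w - A *m (y *m w) *m B = (y - mu *: (A *m y)) *m w.
Proof. by move=> Bw; rewrite !mulmxA -(mulmxA _ w B) Bw -scalemxAr mulmxBl -scalemxAl. Qed.

Lemma blockM_rank_one (R : realType) (k n : nat) (y : 'I_k -> 'cV[R]_n) (w : 'rV[R]_n) i :
  blockM (fun j => w 0 (mxtens_unindex j).2 *: y (mxtens_unindex j).1) i = y i *m w.
Proof. by apply/matrixP => r c; rewrite !mxE mxtens_unindex_blk big_ord1 mulrC. Qed.

Lemma neuron_spread (R : realType) (n : nat) (s : R -> R) (alpha theta : R)
    (y : 'cV[R]_n) (w : 'rV[R]_n) (c0 : 'I_n) (x : 'cV[R]_n) :
  w 0 c0 = 1 ->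
  neuron s alpha y theta x
  = \sum_(c < n) (if c == c0 then alpha else 0) * s (dotv (w 0 c *: y) x + theta).
Proof.
move=> wc0; rewrite (bigD1 c0) //= eqxx wc0 scale1r big1 ?addr0 // => c /negbTE ->.
by rewrite mul0r.
Qed.

Lemma Gsigk_sum_neurons (R : realType) (n : nat) (C : R) (s : R -> R) (k : nat)
    (f : 'cV[R]_n -> R) :
  0 <= C -> Gsigk C s k f ->
  exists (alpha : 'I_k -> R) (y : 'I_k -> 'cV[R]_n) (theta : 'I_k -> R),
    (forall i, `|alpha i| <= 2 * C) /\
    f = fun x => \sum_(i < k) neuron s (alpha i) (y i) (theta i) x.
Proof.
move=> C0 [m [g [mk Gg ->]]].
have neuronP i : exists p : R * 'cV[R]_n * R,
    `|p.1.1| <= 2 * C /\ g i = neuron s p.1.1 p.1.2 p.2.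
  by have [a [y [t [a_le ->]]]] := Gg i; exists (a, y, t).
have [P gP] := choice neuronP.
pose Pn (j : nat) := if insub j is Some i then P i else (0, 0, 0).
exists (fun i => (Pn i).1.1), (fun i => (Pn i).1.2), (fun i => (Pn i).2); split.
  by move=> i; rewrite /Pn; case: insubP => [i' _ _|_]; [case: (gP i') | rewrite normr0 mulr_ge0].
apply: funext => x; pose F j := neuron s (Pn j).1.1 (Pn j).1.2 (Pn j).2 x.
have -> : \sum_(i < m) g i x = \sum_(i < m) F i.
  by apply: eq_bigr => i _; rewrite /F /Pn valK; case: (gP i) => _ ->.
rewrite (big_ord_widen k F mk) big_mkcond /=; apply: eq_bigr => i _.
by case: ifPn => // im; rewrite /F /Pn insubN // /neuron mul0r.
Qed.

Theorem lemma3 (R : realType) (n : nat) (C : R) (s : R -> R)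
  (A B : 'M[R]_n) :
  (0 < n)%N -> 0 < C -> sigmoidal s ->
  A \in unitmx -> B \in unitmx ->
  diagonalizable (cmx A) -> diagonalizable (cmx B) ->
  (exists (q : nat) (a : R),
      [/\ (0 < q <= n)%N, a != 0, A ^+ q = a%:M &
          (1%:M - a *: B ^+ q) \in unitmx]) ->
  (forall l m : R[i], eigenvalue (cmx B) l -> eigenvalue (cmx B) m ->
      l != m -> `|l| != `|m|) ->
  forall k : nat, (0 < k)%N -> Gsigk C s k `<=` Ssig C s A B k.
Proof.
move=> n0 C0 _ _ _ _ _ _ distinct_moduli k _ f.
move=> /(Gsigk_sum_neurons (ltW C0)) [alpha [y [theta [alpha_le ->]]]].
have [mu eig_mu] := real_eigenvalue_of_distinct_moduli n0 distinct_moduli.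
have [w [c0 [Bw wc0]]] := eigenvalue_pinned_left_eigenvector eig_mu.
pose blk_of (j : 'I_(k * n)) := mxtens_unindex j.
exists (fun j => if (blk_of j).2 == c0 then alpha (blk_of j).1 else 0).
exists (fun j => w 0 (blk_of j).2 *: y (blk_of j).1).
exists (fun j => theta (blk_of j).1); split.
- by move=> j; case: ifP => // _; rewrite normr0 mulr_ge0 ?ltW.
- move=> i; exists (y i - mu *: (A *m y i)), w^T.
  by rewrite trmxK blockM_rank_one (displacement_rank_one _ _ Bw).
- apply: funext => x; rewrite sum_blk; apply: eq_bigr => i _.
  by rewrite (neuron_spread _ _ _ _ _ wc0); apply: eq_bigr => c _; rewrite /blk_of mxtens_unindex_blk.
Qed.
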